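(* Let $T,Q,R$ be pairwise compatible tilings. Then $R$ is compatible with $T\cap Q$ and with $T\cup Q$, and $R\cap(T\cup Q)=(R\cap T)\cup(R\cap Q)$.
   Context: Fix an integer $n\ge 3$ and write $[n]=\{1,\dots,n\}$. Let $\Lambda$ be the set of 3-element subsets of $[n]$; a triple $\{i,j,k\}$ with $i<j<k$ is written $ijk$. For a 4-element subset $F=\{i<j<k<l\}$ of $[n]$, the stick of $F$ is the sequence $(ijk,\ ijl,\ ikl,\ jkl)$. A tiling (the inversion set of a rhombus tiling of the zonogon $Z(n;2)$) is a subset $T\subseteq\Lambda$ such that for every 4-element $F\subseteq[n]$, $T\cap\mathrm{stick}(F)$ is an initial segment or a final segment of the stick (empty set and whole stick allowed). Two tilings $T,T'$ are compatible if both $T\cap T'$ and $T\cup T'$ are tilings. *)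

From mathcomp Require Import all_boot all_order.
Set Implicit Arguments. Unset Strict Implicit. Unset Printing Implicit Defensive.

(* [n] = {1,...,n} is modelled by 'I_n = {0,...,n-1} (order-preserving shift). *)

Definition Lambda (n : nat) : {set {set 'I_n}} := [set A : {set 'I_n} | #|A| == 3].

Definition sorted_elems n (F : {set 'I_n}) : seq 'I_n :=
  sort (fun a b : 'I_n => (a <= b)%N) (enum F).

(* stick of F = {i<j<k<l}: (ijk, ijl, ikl, jkl) = (F\l, F\k, F\j, F\i). *)
Definition stick n (F : {set 'I_n}) : seq {set 'I_n} :=
  [seq F :\ x | x <- rev (sorted_elems F)].

Definition stick_meet n (T : {set {set 'I_n}}) (F : {set 'I_n}) : seq {set 'I_n} :=
  [seq S <- stick F | S \in T].

Definition is_tiling n (T : {set {set 'I_n}}) : Prop :=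
  T \subset Lambda n /\
  forall F : {set 'I_n}, #|F| = 4 ->
    exists m, stick_meet T F = take m (stick F) \/ stick_meet T F = drop m (stick F).

Definition compatible n (T T' : {set {set 'I_n}}) : Prop :=
  is_tiling (T :&: T') /\ is_tiling (T :|: T').

From mathcomp Require Import all_boot all_order.
Set Implicit Arguments. Unset Strict Implicit. Unset Printing Implicit Defensive.

(* Every condition involved is local to the sticks: on the stick of a 4-set F
   a family of triples is recorded by a word of 4 bits, intersection and union
   act bitwise, and a family is a tiling iff each of these words has the shape
   1..10..0 or 0..01..1.  Compatibility of R with T :&: Q and with T :|: Q is
   thus a statement about triples of 4-bit words, checked by exhausting all
   of them; the last identity is distributivity. *)

Definition ones_then_zeros (b : bitseq) m := all id (take m b) && all negb (drop m b).
Definition zeros_then_ones (b : bitseq) m := all negb (take m b) && all id (drop m b).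

Definition segment_bits (b : bitseq) :=
  has (fun m => ones_then_zeros b m || zeros_then_ones b m) (iota 0 (size b).+1).

Section Segments.
Variable T : eqType.

Definition is_segment (s u : seq T) := exists m, u = take m s \/ u = drop m s.

Lemma uniq_filter_eq_prefix (p : pred T) (u v : seq T) : uniq (u ++ v) ->
  filter p (u ++ v) = u <-> all p u && all (predC p) v.
Proof.
move=> uv_uniq; split=> [fE | /andP[pu npv]].
- apply/andP; split; apply/allP=> x xin.
  + by move: xin; rewrite -{1}fE mem_filter => /andP[].
  + apply/negP=> px; move: uv_uniq; rewrite cat_uniq => /and3P[_ /hasP[]].
    by exists x; rewrite // -fE mem_filter px mem_cat xin orbT.
- rewrite filter_cat (all_filterP pu).
  by move: npv; rewrite all_predC has_filter negbK => /eqP->; rewrite cats0.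
Qed.

Lemma uniq_filter_eq_suffix (p : pred T) (u v : seq T) : uniq (u ++ v) ->
  filter p (u ++ v) = v <-> all (predC p) u && all p v.
Proof.
move=> uv_uniq; have := @uniq_filter_eq_prefix p (rev v) (rev u).
rewrite -rev_cat rev_uniq filter_rev !all_rev => /(_ uv_uniq) revE.
split=> [fE | /andP[npu pv]]; first by rewrite andbC; apply/revE; rewrite fE.
by apply/(can_inj revK)/revE; rewrite pv npu.
Qed.

Lemma is_segment_filter (p : pred T) (s : seq T) : uniq s ->
  is_segment s (filter p s) <-> segment_bits (map p s).
Proof.
move=> s_uniq.
have prefixE m : filter p s = take m s <-> ones_then_zeros (map p s) m.
  rewrite /ones_then_zeros -map_take -map_drop !all_map.
  by have := @uniq_filter_eq_prefix p (take m s) (drop m s); rewrite cat_take_drop; apply.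
have suffixE m : filter p s = drop m s <-> zeros_then_ones (map p s) m.
  rewrite /zeros_then_ones -map_take -map_drop !all_map.
  by have := @uniq_filter_eq_suffix p (take m s) (drop m s); rewrite cat_take_drop; apply.
split=> [[m fE] | /hasP[m _ /orP[/prefixE | /suffixE] fE]];
  [| by exists m; left | by exists m; right].
have [k k_le kE] : exists2 k, k <= size s &
    filter p s = take k s \/ filter p s = drop k s.
  have [|lt_sm] := leqP m (size s); first by exists m.
  have le_sm := ltnW lt_sm; exists (size s) => //.
  by rewrite take_size drop_size; move: fE; rewrite take_oversize ?drop_oversize.
apply/hasP; exists k; first by rewrite mem_iota size_map add0n ltnS.
by apply/orP; case: kE => [/prefixE | /suffixE]; [left | right].
Qed.

End Segments.

Definition andbs (a b : bitseq) := [seq x.1 && x.2 | x <- zip a b].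
Definition orbs (a b : bitseq) := [seq x.1 || x.2 | x <- zip a b].

Definition compatible_bits (a b : bitseq) :=
  segment_bits (andbs a b) && segment_bits (orbs a b).

Fixpoint bitseqs (k : nat) : seq bitseq :=
  if k is k'.+1 then [seq b :: s | b <- [:: false; true], s <- bitseqs k']
  else [:: [::]].

Lemma mem_bitseqs (s : bitseq) : s \in bitseqs (size s).
Proof.
elim: s => [|b s IHs] //=.
by rewrite !mem_cat; case: b; rewrite map_f ?orbT.
Qed.

Lemma compatible_bits_meet_join (t q r : bitseq) :
  size t = 4 -> size q = 4 -> size r = 4 ->
  compatible_bits t q -> compatible_bits t r -> compatible_bits q r ->
  compatible_bits r (andbs t q) && compatible_bits r (orbs t q).
Proof.
have check : all (fun t => all (fun q => all (fun r =>
    [==> compatible_bits t q, compatible_bits t r, compatible_bits q r =>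
         compatible_bits r (andbs t q) && compatible_bits r (orbs t q)])
  (bitseqs 4)) (bitseqs 4)) (bitseqs 4) by vm_compute.
have mem4 s : size s = 4 -> s \in bitseqs 4 by move <-; apply: mem_bitseqs.
move=> /mem4 t4 /mem4 q4 /mem4 r4 tq tr qr.
move/allP: check => /(_ t t4) /allP /(_ q q4) /allP /(_ r r4).
by rewrite tq tr qr.
Qed.

Definition stick_bits n (X : {set {set 'I_n}}) (F : {set 'I_n}) : bitseq :=
  [seq A \in X | A <- stick F].

Lemma size_stick n (F : {set 'I_n}) : size (stick F) = #|F|.
Proof. by rewrite size_map size_rev size_sort cardE. Qed.

Lemma size_stick_bits n (X : {set {set 'I_n}}) F : size (stick_bits X F) = #|F|.
Proof. by rewrite size_map size_stick. Qed.

Lemma uniq_stick n (F : {set 'I_n}) : uniq (stick F).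
Proof.
rewrite map_inj_in_uniq ?rev_uniq ?sort_uniq ?enum_uniq //.
move=> x y; rewrite !mem_rev !mem_sort !mem_enum => xF yF eqFxy.
apply/eqP; apply: contraT => neq_xy.
by move/setP/(_ x): eqFxy; rewrite !inE eqxx neq_xy xF.
Qed.

Lemma stick_bitsI n (X Y : {set {set 'I_n}}) F :
  stick_bits (X :&: Y) F = andbs (stick_bits X F) (stick_bits Y F).
Proof. by rewrite /stick_bits /andbs; elim: (stick F) => //= A s ->; rewrite inE. Qed.

Lemma stick_bitsU n (X Y : {set {set 'I_n}}) F :
  stick_bits (X :|: Y) F = orbs (stick_bits X F) (stick_bits Y F).
Proof. by rewrite /stick_bits /orbs; elim: (stick F) => //= A s ->; rewrite inE. Qed.

Lemma tilingP n (X : {set {set 'I_n}}) : is_tiling X <->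
  X \subset Lambda n /\
  forall F : {set 'I_n}, #|F| = 4 -> segment_bits (stick_bits X F).
Proof.
have segE (F : {set 'I_n}) :
    is_segment (stick F) (stick_meet X F) <-> segment_bits (stick_bits X F).
  exact: is_segment_filter (uniq_stick F).
by split=> -[XL segX]; split=> // F /segX /segE.
Qed.

Lemma compatibleP n (X Y : {set {set 'I_n}}) : compatible X Y <->
  X :|: Y \subset Lambda n /\
  forall F : {set 'I_n}, #|F| = 4 -> compatible_bits (stick_bits X F) (stick_bits Y F).
Proof.
split=> [[/tilingP[_ segI] /tilingP[XYL segU]] | [XYL segXY]].
  by split=> // F F4; rewrite /compatible_bits -stick_bitsI -stick_bitsU segI ?segU.
split; apply/tilingP; split=> [|F /segXY /andP[]]; rewrite ?stick_bitsI ?stick_bitsU //.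
exact: subset_trans (subsetIl X Y) (subset_trans (subsetUl X Y) XYL).
Qed.

Theorem lemma1 (n : nat) (Hn : 3 <= n) (T Q R : {set {set 'I_n}}) :
  is_tiling T -> is_tiling Q -> is_tiling R ->
  compatible T Q -> compatible T R -> compatible Q R ->
  compatible R (T :&: Q) /\ compatible R (T :|: Q) /\
  R :&: (T :|: Q) = (R :&: T) :|: (R :&: Q).
Proof.
move=> _ _ _ /compatibleP[TQL bitsTQ] /compatibleP[_ bitsTR] /compatibleP[QRL bitsQR].
have bitsR (F : {set 'I_n}) : #|F| = 4 ->
    compatible_bits (stick_bits R F) (stick_bits (T :&: Q) F) &&
    compatible_bits (stick_bits R F) (stick_bits (T :|: Q) F).
  move=> F4; rewrite stick_bitsI stick_bitsU.
  by apply: compatible_bits_meet_join; rewrite ?size_stick_bits; auto.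
move: TQL QRL; rewrite !subUset => /andP[TL QL] /andP[_ RL].
split; [|split]; last exact: setIUr.
- apply/compatibleP; split=> [|F /bitsR /andP[] //].
  by rewrite subUset RL (subset_trans (subsetIl T Q) TL).
- apply/compatibleP; split=> [|F /bitsR /andP[] //].
  by rewrite !subUset RL TL QL.
Qed.
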